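(* Let $A$ be an antilinear operator on a complex $n$-dimensional space $W$ and let $\lambda>0$ be real. For integers $k\ge 0$ put $W_\lambda^{(k)}=\ker(A^2-\lambda^2I)^k$ and, for $k\ge1$, $W_\lambda^{(k)\pm}=\{x\in W:(A\mp\lambda I)(A^2-\lambda^2I)^{k-1}x=0\}$ (real subspaces of $W$ containing $W_\lambda^{(k-1)}$). Then for every positive integer $k$, as real vector spaces, $$W_\lambda^{(k)}/W_\lambda^{(k-1)}=W_\lambda^{(k)+}/W_\lambda^{(k-1)}\ \oplus\ W_\lambda^{(k)-}/W_\lambda^{(k-1)},$$ and moreover $W_\lambda^{(k)}/W_\lambda^{(k-1)}=\mathrm{span}_{\mathbb C}\bigl(W_\lambda^{(k)+}/W_\lambda^{(k-1)}\bigr)$.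
   Context: An antilinear operator satisfies $A(zv+w)=\bar z Av+Aw$; $A^2$ is then complex linear and commutes with $A$. Since $\lambda$ is real, $A\mp\lambda I$ is antilinear, so $W_\lambda^{(k)\pm}$ are real (not necessarily complex) subspaces. *)

From HB Require Import structures.
From mathcomp Require Import all_boot all_order all_algebra.
Set Implicit Arguments. Unset Strict Implicit. Unset Printing Implicit Defensive.
Import Order.TTheory GRing.Theory Num.Theory.
Local Open Scope ring_scope.

(* A complex field: numClosedFieldType C (e.g. algC); W = C^n as row vectors. *)

Definition antilinear (C : numClosedFieldType) (n : nat) (A : 'rV[C]_n -> 'rV[C]_n) :=
  forall (z : C) (v w : 'rV[C]_n), A (z *: v + w) = z^* *: A v + A w.

Definition sqShift (C : numClosedFieldType) (n : nat) (A : 'rV[C]_n -> 'rV[C]_n)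
  (l : C) (x : 'rV[C]_n) : 'rV[C]_n := A (A x) - (l ^+ 2) *: x.

Definition Wk (C : numClosedFieldType) (n : nat) (A : 'rV[C]_n -> 'rV[C]_n)
  (l : C) (k : nat) (x : 'rV[C]_n) : Prop := iter k (sqShift A l) x = 0.

Definition Wkplus (C : numClosedFieldType) (n : nat) (A : 'rV[C]_n -> 'rV[C]_n)
  (l : C) (k : nat) (x : 'rV[C]_n) : Prop :=
  let y := iter k.-1 (sqShift A l) x in A y - l *: y = 0.

Definition Wkminus (C : numClosedFieldType) (n : nat) (A : 'rV[C]_n -> 'rV[C]_n)
  (l : C) (k : nat) (x : 'rV[C]_n) : Prop :=
  let y := iter k.-1 (sqShift A l) x in A y + l *: y = 0.

From HB Require Import structures.
From mathcomp Require Import all_boot all_order all_algebra.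
Import Order.TTheory GRing.Theory Num.Theory.
Local Open Scope ring_scope.

(* For real l the operator B = A^2 - l^2 is C-linear and commutes with A, so
   every power of B does too.  If B y = 0 then A^2 y = l^2 y, and
   y = (A y + l y)/2l + (l y - A y)/2l splits y into eigenvectors of A for the
   eigenvalues l and -l; applying this to y = B^(k-1) x and pulling the
   splitting back through B^(k-1) gives the decomposition of W^(k)/W^(k-1).
   Antilinearity turns an eigenvector u for -l into the eigenvector i u for l,
   which gives the complex span statement. *)

Set Implicit Arguments.

Lemma iter_linear (R : pzRingType) (U : lmodType R) (f : U -> U) :
  linear f -> forall j, linear (iter j f).
Proof. by move=> lin_f; elim=> [|j IHj] a u v //=; rewrite IHj lin_f. Qed.

Lemma iter_comm (T : Type) (f g : T -> T) :
  (forall x, f (g x) = g (f x)) -> forall j x, f (iter j g x) = iter j g (f x).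
Proof. by move=> fg; elim=> [|j IHj] x //=; rewrite fg IHj. Qed.

Section AntilinearOperator.

Variables (C : numClosedFieldType) (n : nat) (A : 'rV[C]_n -> 'rV[C]_n).
Hypothesis antiA : antilinear A.

Lemma antilinearD v w : A (v + w) = A v + A w.
Proof. by have := antiA 1 v w; rewrite !scale1r rmorph1 scale1r. Qed.

Lemma antilinear0 : A 0 = 0.
Proof. by apply: (addrI (A 0)); rewrite -antilinearD !addr0. Qed.

Lemma antilinearZ z v : A (z *: v) = z^* *: A v.
Proof. by have := antiA z v 0; rewrite !addr0 antilinear0 addr0. Qed.

Lemma antilinearZ_real z v : z \is Num.real -> A (z *: v) = z *: A v.
Proof. by move=> z_real; rewrite antilinearZ conj_Creal. Qed.

Lemma antilinearN v : A (- v) = - A v.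
Proof. by rewrite -scaleN1r antilinearZ_real ?scaleN1r ?rpredN1. Qed.

Lemma antilinear_eigen_i c u :
  c \is Num.real -> A u = c *: u -> A ('i *: u) = (- c) *: ('i *: u).
Proof.
by move=> c_real Au; rewrite antilinearZ conjCi Au !scalerA !mulNr mulrC.
Qed.

Lemma sqShiftN c u : sqShift A (- c) u = sqShift A c u.
Proof. by rewrite /sqShift sqrrN. Qed.

Lemma sqShift_is_linear c : linear (sqShift A c).
Proof.
move=> a u v; rewrite /sqShift !antilinearD !antilinearZ conjCK.
by rewrite scalerBr scalerDr !scalerA mulrC opprD addrACA.
Qed.

HB.instance Definition _ c := GRing.isLinear.Build C 'rV[C]_n 'rV[C]_n *:%R
  (sqShift A c) (sqShift_is_linear c).

Lemma sqShift_eigen c u :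
  c \is Num.real -> A u = c *: u -> sqShift A c u = 0.
Proof.
by move=> c_real Au; rewrite /sqShift Au antilinearZ_real // Au scalerA subrr.
Qed.

Definition eigenpart (c : C) (x : 'rV[C]_n) := (2 * c)^-1 *: (A x + c *: x).

Lemma eigenpart_eigen c u :
  c \is Num.real -> sqShift A c u = 0 -> A (eigenpart c u) = c *: eigenpart c u.
Proof.
move=> c_real /eqP; rewrite subr_eq0 => /eqP AAu.
have inv_real : (2 * c)^-1 \is Num.real by rewrite rpredV rpredM ?rpred_nat.
rewrite antilinearZ_real // antilinearD antilinearZ_real // AAu.
rewrite [RHS]scalerA [c * _]mulrC -[RHS]scalerA; congr (_ *: _).
by rewrite scalerDr scalerA -expr2 addrC.
Qed.

Lemma add_eigenpartN c x : c != 0 -> eigenpart c x + eigenpart (- c) x = x.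
Proof.
move=> c_neq0; rewrite /eigenpart mulrN invrN scaleNr -scalerBr.
rewrite addrAC opprD addrA subrr add0r scaleNr opprK -scalerDl.
rewrite scalerA -mulr2n -(mulr_natl c 2) mulVf ?scale1r //.
by rewrite mulf_neq0 ?pnatr_eq0.
Qed.

Variable l : C.
Hypothesis l_real : l \is Num.real.

Definition sqShiftX j := iter j (sqShift A l).

HB.instance Definition _ j := GRing.isLinear.Build C 'rV[C]_n 'rV[C]_n *:%R
  (sqShiftX j) (iter_linear (sqShift_is_linear l) j).

Lemma sqShiftX_comm j x : A (sqShiftX j x) = sqShiftX j (A x).
Proof.
apply: iter_comm => u.
by rewrite /sqShift antilinearD antilinearN antilinearZ_real ?rpredX.
Qed.

Lemma sqShiftX_eigenpart c j x :
  sqShiftX j (eigenpart c x) = eigenpart c (sqShiftX j x).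
Proof. by rewrite linearZ linearD linearZ /= -sqShiftX_comm. Qed.

Lemma WkE k x : Wk A l k x <-> sqShiftX k x = 0.
Proof. by []. Qed.

Lemma WkplusE j x : Wkplus A l j.+1 x <-> A (sqShiftX j x) = l *: sqShiftX j x.
Proof. by rewrite /Wkplus /=; split=> [/subr0_eq | ->]; rewrite ?subrr. Qed.

Lemma WkminusE j x :
  Wkminus A l j.+1 x <-> A (sqShiftX j x) = (- l) *: sqShiftX j x.
Proof.
rewrite /Wkminus /= scaleNr; split=> [/eqP | ->]; last by rewrite addNr.
by rewrite addr_eq0 => /eqP.
Qed.

Lemma Wk_sub j x : Wk A l j x -> Wk A l j.+1 x.
Proof. by move=> Wx; rewrite /Wk iterS Wx linear0. Qed.

Lemma WkD k x y : Wk A l k x -> Wk A l k y -> Wk A l k (x + y).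
Proof.
by move=> /WkE Wx /WkE Wy; apply/WkE; rewrite linearD /= Wx Wy addr0.
Qed.

Lemma Wk_span k (s : seq (C * 'rV[C]_n)) :
  (forall p, p \in s -> Wk A l k p.2) -> Wk A l k (\sum_(p <- s) p.1 *: p.2).
Proof.
move=> Ws; apply/WkE; rewrite linear_sum big_seq big1 // => p /Ws /WkE Wp.
by rewrite linearZ /= Wp scaler0.
Qed.

Lemma Wkplus_sub j x : Wkplus A l j.+1 x -> Wk A l j.+1 x.
Proof. by move=> /WkplusE Ax; apply: sqShift_eigen. Qed.

Lemma Wkminus_sub j x : Wkminus A l j.+1 x -> Wk A l j.+1 x.
Proof.
by move=> /WkminusE Ax; rewrite /Wk iterS -(sqShiftN l) sqShift_eigen ?rpredN.
Qed.

Lemma Wkminus_rotate j x : Wkminus A l j.+1 x -> Wkplus A l j.+1 ('i *: x).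
Proof.
move=> /WkminusE Ax; apply/WkplusE.
by rewrite linearZ /= (antilinear_eigen_i _ Ax) ?rpredN // opprK.
Qed.

Hypothesis l_neq0 : l != 0.

Lemma Wkplus_eigenpart j x : Wk A l j.+1 x -> Wkplus A l j.+1 (eigenpart l x).
Proof.
by move=> Wx; apply/WkplusE; rewrite sqShiftX_eigenpart eigenpart_eigen.
Qed.

Lemma Wkminus_eigenpart j x :
  Wk A l j.+1 x -> Wkminus A l j.+1 (eigenpart (- l) x).
Proof.
move=> Wx; apply/WkminusE.
by rewrite sqShiftX_eigenpart eigenpart_eigen ?rpredN // sqShiftN.
Qed.

Lemma Wkplus_minus j x : Wkplus A l j.+1 x -> Wkminus A l j.+1 x -> Wk A l j x.
Proof.
move=> /WkplusE Ap /WkminusE; rewrite Ap => /eqP; rewrite -subr_eq0 -scalerBl.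
by rewrite scaler_eq0 opprK -mulr2n mulrn_eq0 (negbTE l_neq0) /= => /eqP.
Qed.

Lemma Wk_decomp j x :
  Wk A l j.+1 x <->
  exists y z, [/\ Wkplus A l j.+1 y, Wkminus A l j.+1 z & x = y + z].
Proof.
split=> [Wx | [y [z [/Wkplus_sub Wy /Wkminus_sub Wz ->]]]]; last exact: WkD.
exists (eigenpart l x), (eigenpart (- l) x).
split; [exact: Wkplus_eigenpart | exact: Wkminus_eigenpart |].
by rewrite add_eigenpartN.
Qed.

Lemma Wk_spanC j x :
  Wk A l j.+1 x <->
  exists s : seq (C * 'rV[C]_n),
    (forall p, p \in s -> Wkplus A l j.+1 p.2) /\
    Wk A l j (x - \sum_(p <- s) p.1 *: p.2).
Proof.
split=> [Wx | [s [Ws Wr]]].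
  exists [:: (1, eigenpart l x); (- 'i, 'i *: eigenpart (- l) x)]; split.
    move=> p; rewrite !inE => /orP[] /eqP -> /=.
      exact: Wkplus_eigenpart.
    exact/Wkminus_rotate/Wkminus_eigenpart.
  rewrite !big_cons big_nil /= addr0 scale1r scalerA mulNr mulCii opprK scale1r.
  by rewrite add_eigenpartN // subrr; apply/WkE; rewrite linear0.
rewrite -(subrK (\sum_(p <- s) p.1 *: p.2) x).
apply: WkD; first exact: Wk_sub.
by apply: Wk_span => p /Ws /Wkplus_sub.
Qed.

End AntilinearOperator.

Theorem mainTheorem4 (C : numClosedFieldType) (n : nat)
  (A : 'rV[C]_n -> 'rV[C]_n) (l : C) (k : nat) :
  antilinear A -> l \is Num.real -> 0 < l -> (0 < k)%N ->
  (* W^(k)/W^(k-1) = W^(k)+/W^(k-1) + W^(k)-/W^(k-1) *)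
  [/\ (forall x, Wk A l k x <->
         exists y z, [/\ Wkplus A l k y, Wkminus A l k z & x = y + z]),
      (* the sum is direct: (W^(k)+/W^(k-1)) ∩ (W^(k)-/W^(k-1)) = 0 *)
      (forall x, Wkplus A l k x -> Wkminus A l k x -> Wk A l k.-1 x) &
      (* W^(k)/W^(k-1) = span_C (W^(k)+/W^(k-1)) *)
      (forall x, Wk A l k x <->
         exists s : seq (C * 'rV[C]_n),
           (forall p, p \in s -> Wkplus A l k p.2) /\
           Wk A l k.-1 (x - \sum_(p <- s) p.1 *: p.2))].
Proof.
move=> antiA l_real /lt0r_neq0 l_neq0; case: k => // j _.
split=> x.
- exact: Wk_decomp.
- exact: Wkplus_minus.
- exact: Wk_spanC.
Qed.
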